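(* Let $K$ be a field, let $A$ be a finitely generated $K$-algebra that is a (right and left) Goldie domain, with quotient division algebra $Q(A)$, and let $E$ be a division subalgebra of $Q(A)$. If $Q(A)$ is infinite dimensional as a right $E$-vector space, then $AE$ is infinite dimensional as a right $E$-vector space.
   Context: $AE$ denotes the right $E$-subspace of $Q(A)$ consisting of finite sums $\sum a_ie_i$ with $a_i\in A$, $e_i\in E$. A Goldie domain has a classical (Ore) quotient division algebra $Q(A)$, in which every finite set of elements has a common left denominator from $A$. *)

From HB Require Import structures.
From mathcomp Require Import all_boot all_order all_algebra.
Set Implicit Arguments. Unset Strict Implicit. Unset Printing Implicit Defensive.
Import GRing.Theory.
Local Open Scope ring_scope.

Section Defs.
Variables (K : fieldType) (Q : unitAlgType K).

(* Q is a division ring: every nonzero element is invertible (Q is nontrivial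
   since unitRingType is a nonzero ring). *)
Definition is_division_ring : Prop := forall x : Q, x != 0 -> x \is a GRing.unit.

Definition is_subalg (B : Q -> Prop) : Prop :=
  [/\ B 1,
      (forall x y, B x -> B y -> B (x + y)),
      (forall x y, B x -> B y -> B (x * y)) &
      (forall (k : K) x, B x -> B (k *: x))].

Definition fg_subalg (A : Q -> Prop) : Prop :=
  exists s : seq Q,
    [/\ is_subalg A,
        (forall x, x \in s -> A x) &
        (forall B, is_subalg B -> (forall x, x \in s -> B x) -> forall x, A x -> B x)].

(* Q is the classical (left and right Ore) quotient division ring of A:
   every element is a left fraction a^-1 b and a right fraction b a^-1. *)
Definition classical_quotient (A : Q -> Prop) : Prop :=
  (forall q : Q, exists a b, [/\ A a, A b, a != 0 & q = a^-1 * b]) /\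
  (forall q : Q, exists a b, [/\ A a, A b, a != 0 & q = b * a^-1]).

Definition division_subalg (E : Q -> Prop) : Prop :=
  is_subalg E /\ (forall x, E x -> x != 0 -> E x^-1).

Definition AE_set (A E : Q -> Prop) (x : Q) : Prop :=
  exists n (a e : 'I_n -> Q),
    [/\ (forall i, A (a i)), (forall i, E (e i)) & x = \sum_(i < n) a i * e i].

Definition rfree (E : Q -> Prop) n (v : 'I_n -> Q) : Prop :=
  forall e : 'I_n -> Q, (forall i, E (e i)) ->
    \sum_(i < n) v i * e i = 0 -> forall i, e i = 0.

(* S has infinite dimension as a right E-vector space: it contains right
   E-linearly independent families of every finite size. *)
Definition inf_rdim (E S : Q -> Prop) : Prop :=
  forall n, exists v : 'I_n -> Q, (forall i, S (v i)) /\ rfree E v.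

End Defs.

(* Clear a common left denominator: since every element of Q is a left
   fraction a^-1 b over A, any n right E-independent elements v_i of Q become
   elements c v_i of A after left multiplication by a single nonzero c in A.
   Left multiplication by the unit c preserves right E-independence, and each
   c v_i = (c v_i) * 1 lies in AE. *)

From mathcomp Require Import all_boot all_order all_algebra.
Set Implicit Arguments. Unset Strict Implicit. Unset Printing Implicit Defensive.
Import GRing.Theory.
Local Open Scope ring_scope.

Section CommonLeftDenominator.
Variables (R : unitRingType) (A : R -> Prop).
Hypothesis R_div : forall x : R, x != 0 -> x \is a GRing.unit.
Hypothesis A1 : A 1.
Hypothesis AM : forall x y, A x -> A y -> A (x * y).
Hypothesis left_frac : forall q : R, exists a b, [/\ A a, A b, a != 0 & q = a^-1 * b].

Lemma mul_neq0_div (x y : R) : x != 0 -> y != 0 -> x * y != 0.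
Proof.
move=> /R_div ux y0; apply: contraNneq y0 => xy0.
by rewrite -(mulKr ux y) xy0 mulr0.
Qed.

Lemma common_left_denominator (s : seq R) :
  exists c, [/\ A c, c != 0 & forall q, q \in s -> A (c * q)].
Proof.
elim: s => [|q s [d [Ad d0 Ads]]].
  by exists 1; split => //; apply: oner_neq0.
have [a [b [Aa Ab a0 ->]]] := left_frac q.
(* Ore step: rewrite d a^-1 as a left fraction x^-1 y; then x d = y a. *)
have [x [y [Ax Ay x0 dVa]]] := left_frac (d * a^-1).
have xd : x * d = y * a.
  by rewrite -[y](mulVKr (R_div x0)) -dVa -mulrA mulrVK ?R_div.
exists (x * d); split; [exact: AM | exact: mul_neq0_div |].
move=> q'; rewrite inE => /orP [/eqP -> | /Ads Adq'].
  by rewrite xd -mulrA mulVKr ?R_div //; apply: AM.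
by rewrite -mulrA; apply: AM.
Qed.

End CommonLeftDenominator.

Lemma rfree_mull (K : fieldType) (Q : unitAlgType K) (E : Q -> Prop) n
    (v : 'I_n -> Q) (c : Q) :
  c \is a GRing.unit -> rfree E v -> rfree E (fun i => c * v i).
Proof.
move=> uc vfree e Ee cv0; apply: vfree => //.
by rewrite -(mulKr uc (\sum_i v i * e i)) mulr_sumr
  (eq_bigr _ (fun i _ => mulrA _ _ _)) cv0 mulr0.
Qed.

Lemma AE_set_l (K : fieldType) (Q : unitAlgType K) (A E : Q -> Prop) x :
  E 1 -> A x -> AE_set A E x.
Proof.
move=> E1 Ax; exists 1%N, (fun _ => x), (fun _ => 1); split => //.
by rewrite big_ord1 mulr1.
Qed.

Theorem mainTheorem5 (K : fieldType) (Q : unitAlgType K) (A E : Q -> Prop) :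
  is_division_ring Q ->
  fg_subalg A ->
  classical_quotient A ->
  division_subalg E ->
  inf_rdim E (fun _ => True) ->
  inf_rdim E (AE_set A E).
Proof.
move=> Qdiv [_ [[A1 _ AM _] _ _]] [left_frac _] [[E1 _ _ _] _] Qinf n.
have [v [_ vfree]] := Qinf n.
have [c [_ c0 Acv]] := common_left_denominator Qdiv A1 AM left_frac
  [seq v i | i <- enum 'I_n].
exists (fun i => c * v i); split; last exact: rfree_mull (Qdiv _ c0) vfree.
by move=> i; apply/AE_set_l/Acv/map_f; rewrite ?mem_enum.
Qed.
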